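(* Let $X,Y$ be Banach lattices and let $\mathcal S$ be a family of convex continuous operators $X\to Y$ such that $\sup_{S\in\mathcal S}\|Sx\|<\infty$ for all $x\in X$. Then: (i) there exists $r>0$ with $\sup_{S\in\mathcal S}\|S\|_r<\infty$; (ii) for every $x_0\in X$ there exists $r>0$ with $\sup_{x\in B(x_0,r)}\sup_{S\in\mathcal S}\|S_x\|_r<\infty$.
   Context: An operator $S\colon X\to Y$ is convex if $S(\lambda x+(1-\lambda)y)\le\lambda Sx+(1-\lambda)Sy$ for all $x,y\in X$, $\lambda\in[0,1]$. $B(x_0,r):=\{x\in X:\|x-x_0\|\le r\}$, $\|S\|_r:=\sup_{x\in B(0,r)}\|Sx\|$, and $S_x y:=S(x+y)-Sx$ for $x,y\in X$. *)

From HB Require Import structures.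
From mathcomp Require Import all_boot all_order all_algebra.
From mathcomp Require Import all_classical all_reals all_analysis.
Set Implicit Arguments. Unset Strict Implicit. Unset Printing Implicit Defensive.
Import Order.TTheory GRing.Theory Num.Theory.
Import numFieldNormedType.Exports.
Local Open Scope classical_set_scope.
Local Open Scope ring_scope.

(* A (real) Banach lattice: a real Banach space V (completeNormedModType R)
   equipped with an order relation [le] making it a vector lattice, with a
   lattice norm: |x| <= |y| implies ||x|| <= ||y||, where |x| = x \/ (-x). *)

Definition is_lub_of {T : Type} (le : T -> T -> Prop) (x y s : T) : Prop :=
  le x s /\ le y s /\ forall u, le x u -> le y u -> le s u.

Record is_banach_lattice (R : realType) (V : completeNormedModType R)
    (le : V -> V -> Prop) : Prop := {
  bl_refl : forall x, le x x;
  bl_antisym : forall x y, le x y -> le y x -> x = y;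
  bl_trans : forall x y z, le x y -> le y z -> le x z;
  bl_add : forall x y z, le x y -> le (x + z) (y + z);
  bl_scale : forall (a : R) x y, 0 <= a -> le x y -> le (a *: x) (a *: y);
  bl_sup : forall x y, exists s, is_lub_of le x y s;
  bl_norm : forall x y ax ay, is_lub_of le x (- x) ax -> is_lub_of le y (- y) ay ->
     le ax ay -> `|x| <= `|y|
}.

Definition convex_operator (R : realType) (X Y : completeNormedModType R)
    (leY : Y -> Y -> Prop) (S : X -> Y) : Prop :=
  forall (x y : X) (l : R), 0 <= l <= 1 ->
    leY (S (l *: x + (1 - l) *: y)) (l *: S x + (1 - l) *: S y).

(* By Baire's theorem, the pointwise bounded family of continuous operators is
   uniformly bounded on some ball B(a, eps).  Convexity moves this bound to any
   point x0: the point x0 + d is the midpoint of the fixed point 2 x0 - a and of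
   a + 2 d, which lies in B(a, eps) when d is small, so S (x0 + d) is bounded
   above in the order of Y; and x0 is the midpoint of x0 - d and x0 + d, so
   S (x0 + d) >= 2 S x0 - S (x0 - d) is bounded below.  In a Banach lattice,
   a <= y <= b gives ||y|| <= ||a|| + ||b||, turning these order bounds into a
   uniform norm bound near x0; both claims follow by the triangle inequality. *)

From HB Require Import structures.
From mathcomp Require Import all_boot all_order all_algebra.
From mathcomp Require Import all_classical all_reals all_analysis.
From mathcomp Require Import lra.
Import Order.TTheory GRing.Theory Num.Theory.
Import numFieldNormedType.Exports.
Local Open Scope classical_set_scope.
Local Open Scope ring_scope.

Set Implicit Arguments. Unset Strict Implicit. Unset Printing Implicit Defensive.

Lemma baire_closed_cover (R : realType) (U : completeNormedModType R)
    (C : (set U)^nat) :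
  (forall n, closed (C n)) -> \bigcup_n C n = setT ->
  exists n x r, 0 < r /\ ball x r `<=` C n.
Proof.
move=> closedC coverC; apply: contrapT => noball.
have denseNC n : dense (~` C n).
  move=> O [x Ox] oO; apply/set0P/negP => /eqP/disjoints_subset.
  rewrite setCK => OC.
  have /nbhs_ballP[r r0 xrO] : nbhs x O by apply: open_nbhs_nbhs.
  by apply: noball; exists n, x, r; split => //; apply: subset_trans OC.
have := Baire (fun n => conj (closed_openC (closedC n)) (denseNC n)).
by rewrite -setC_bigcup coverC setCT; apply: dense0.
Qed.

Lemma pointwise_bounded_on_ball (R : realType) (X : completeNormedModType R)
    (Y : normedModType R) (F : set (X -> Y)) :
  (forall f, F f -> continuous f) -> pointwise_bounded F ->
  exists a r, 0 < r /\
    exists M, forall f, F f -> forall x, ball a r x -> `|f x| <= M.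
Proof.
move=> contF bddF.
pose C n := \bigcap_(f in F) [set x | `|f x| <= n%:R].
have closedC n : closed (C n).
  apply: closed_bigI => f Ff.
  have normf_cont : continuous (fun x => `|f x|).
    by move=> x; apply: continuous_comp; [apply: contF | apply: norm_continuous].
  exact: (continuous_closedP _).1 normf_cont _ (@closed_le _ n%:R).
have coverC : \bigcup_n C n = setT.
  apply/seteqP; split => // x _; have [M FxM] := bddF x.
  exists (Num.trunc M).+1 => // f Ff; apply: le_trans (FxM f Ff) _.
  exact/ltW/truncnS_gt.
have [n [a [r [r0 arC]]]] := baire_closed_cover closedC coverC.
by exists a, r; split => //; exists n%:R => f Ff x /arC; apply.
Qed.

Lemma scale_half_double (R : numFieldType) (V : lmodType R) (v : V) :
  2^-1 *: (v + v) = v.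
Proof.
by rewrite -mulr2n -(scaler_nat 2 v) scalerA mulVf ?pnatr_eq0 // scale1r.
Qed.

Section BanachLatticeOrder.
Variables (R : realType) (Y : completeNormedModType R) (le : Y -> Y -> Prop).
Hypothesis hY : is_banach_lattice le.

Lemma bl_leN2 x y : le x y -> le (- y) (- x).
Proof.
move=> /(bl_add hY (- x - y)).
by rewrite addrA subrr add0r addrCA subrr addr0.
Qed.

Lemma bl_leD2l z x y : le x y -> le (z + x) (z + y).
Proof. by move=> /(bl_add hY z); rewrite ![_ + z]addrC. Qed.

Lemma bl_leD x y u v : le x y -> le u v -> le (x + u) (y + v).
Proof. by move=> /(bl_add hY u) xy /(bl_leD2l y); apply: (bl_trans hY). Qed.

Lemma abs_lub_ge0 x s : is_lub_of le x (- x) s -> le 0 s.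
Proof.
move=> [xs [Nxs _]]; have := bl_leD xs Nxs; rewrite subrr.
have half_ge0 : 0 <= 2^-1 :> R by rewrite invr_ge0.
by move=> /(bl_scale hY half_ge0); rewrite scaler0 scale_half_double.
Qed.

Lemma abs_lub_id p : le 0 p -> is_lub_of le p (- p) p.
Proof.
move=> p_ge0; split; first exact: bl_refl.
split=> //; apply: (bl_trans hY _ p_ge0); rewrite -oppr0; exact: bl_leN2.
Qed.

Lemma norm_abs_lub x s : is_lub_of le x (- x) s -> `|x| = `|s|.
Proof.
move=> xs; have s_ge0 := abs_lub_ge0 xs.
apply/le_anti/andP; split.
- exact: (bl_norm hY xs (abs_lub_id s_ge0) (bl_refl hY s)).
- exact: (bl_norm hY (abs_lub_id s_ge0) xs (bl_refl hY s)).
Qed.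

Lemma bl_norm_sandwich a y b : le a y -> le y b -> `|y| <= `|a| + `|b|.
Proof.
move=> ay yb.
have [sa asa] := bl_sup hY a (- a); have sa_ge0 := abs_lub_ge0 asa.
have [sb bsb] := bl_sup hY b (- b); have sb_ge0 := abs_lub_ge0 bsb.
have [sy ysy] := bl_sup hY y (- y).
have y_le : le y (sa + sb).
  apply: (bl_trans hY yb); apply: (bl_trans hY (proj1 bsb)).
  rewrite -{1}[sb]add0r; exact: bl_leD sa_ge0 (bl_refl hY sb).
have Ny_le : le (- y) (sa + sb).
  apply: (bl_trans hY (bl_leN2 ay)); apply: (bl_trans hY (proj1 (proj2 asa))).
  rewrite -{1}[sa]addr0; exact: bl_leD (bl_refl hY sa) sb_ge0.
have y_abs : le sy (sa + sb) := (proj2 (proj2 ysy)) _ y_le Ny_le.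
have sab_ge0 : le 0 (sa + sb) by rewrite -[0]addr0; exact: bl_leD.
apply: le_trans (bl_norm hY ysy (abs_lub_id sab_ge0) y_abs) _.
by rewrite (norm_abs_lub asa) (norm_abs_lub bsb) ler_normD.
Qed.

End BanachLatticeOrder.

Section ConvexOperator.
Variables (R : realType) (X Y : completeNormedModType R) (le : Y -> Y -> Prop).
Hypothesis hY : is_banach_lattice le.
Variable S : X -> Y.
Hypothesis convS : convex_operator le S.

Lemma convex_midpoint_le x h : le (S x) (2^-1 *: (S (x - h) + S (x + h))).
Proof.
have half_in01 : (0 : R) <= 2^-1 <= (1 : R) by lra.
have := convS (x - h) (x + h) half_in01.
have -> : 1 - 2^-1 = 2^-1 :> R by lra.
by rewrite -!scalerDr addrACA addNr addr0 scale_half_double.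
Qed.

Lemma convex_lower_le x h : le (2 *: S x - S (x - h)) (S (x + h)).
Proof.
have := bl_scale hY (ler0n R 2) (convex_midpoint_le x h).
rewrite scalerA mulfV ?pnatr_eq0 // scale1r.
by move=> /(bl_add hY (- S (x - h))); rewrite addrAC subrr add0r.
Qed.

Lemma convex_norm_le_of_upper x0 (rho K : R) :
    (forall d, `|d| <= rho -> exists B, le (S (x0 + d)) B /\ `|B| <= K) ->
  forall d, `|d| <= rho -> `|S (x0 + d)| <= 2 * `|S x0| + 2 * K.
Proof.
move=> upper d d_le.
have [B [SB B_le]] := upper d d_le.
have [B' [SB' B'_le]] : exists B', le (S (x0 - d)) B' /\ `|B'| <= K.
  by apply: upper; rewrite normrN.
have lower : le (2 *: S x0 - B') (S (x0 + d)).
  apply: (bl_trans hY _ (convex_lower_le x0 d)).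
  exact: (bl_leD2l hY _ (bl_leN2 hY SB')).
apply: le_trans (bl_norm_sandwich hY lower SB) _.
have := ler_normB (2 *: S x0) B'; rewrite normrZ ger0_norm //.
lra.
Qed.

End ConvexOperator.

Lemma convex_family_bounded_near (R : realType) (X Y : completeNormedModType R)
    (le : Y -> Y -> Prop) (F : set (X -> Y)) :
    is_banach_lattice le -> (forall S, F S -> convex_operator le S) ->
    (forall S, F S -> continuous S) -> pointwise_bounded F ->
  forall x0, exists rho, 0 < rho /\ exists M,
    forall S, F S -> forall z, `|z - x0| <= rho -> `|S z| <= M.
Proof.
move=> hY convF contF bddF x0.
have [a [eps [eps_gt0 [N aepsN]]]] := pointwise_bounded_on_ball contF bddF.
pose c := x0 + (x0 - a).
have [M0 SM0] := bddF x0; have [Mc SMc] := bddF c.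
exists (eps / 4); split; first by rewrite divr_gt0.
exists (2 * M0 + (Mc + N)) => S FS z z_le.
have upper d : `|d| <= eps / 4 ->
    exists B, le (S (x0 + d)) B /\ `|B| <= 2^-1 * (Mc + N).
  move=> d_le; exists (2^-1 *: (S (a + (d + d)) + S c)); split.
    have lo : x0 + d - (x0 - a - d) = a + (d + d).
      by rewrite !opprB addrCA [x0 + d]addrC -[d + x0 + _]addrA subrKC addrA addrC.
    have hi : x0 + d + (x0 - a - d) = c by rewrite addrCA addrK addrC.
    by have := convex_midpoint_le (convF S FS) (x0 + d) (x0 - a - d); rewrite lo hi.
  rewrite normrZ ger0_norm ?invr_ge0 // ler_wpM2l ?invr_ge0 //.
  apply: le_trans (ler_normD _ _) _; rewrite addrC lerD ?SMc //.
  apply: aepsN => //; rewrite -ball_normE /= opprD addNKr normrN.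
  by apply: le_lt_trans (ler_normD _ _) _; lra.
have := convex_norm_le_of_upper hY (convF S FS) upper z_le.
rewrite addrC subrK => /le_trans; apply.
have := SM0 S FS; lra.
Qed.

Theorem theoremA9 (R : realType) (X Y : completeNormedModType R)
    (leX : X -> X -> Prop) (leY : Y -> Y -> Prop)
    (hX : is_banach_lattice leX) (hY : is_banach_lattice leY)
    (F : set (X -> Y))
    (hconv : forall S, F S -> convex_operator leY S)
    (hcont : forall S, F S -> continuous S)
    (hbdd : forall x : X, exists M : R, forall S, F S -> `|S x| <= M) :
  (exists r : R, 0 < r /\ exists M : R,
      forall S, F S -> forall x : X, `|x| <= r -> `|S x| <= M)
  /\
  (forall x0 : X, exists r : R, 0 < r /\ exists M : R,
      forall x : X, `|x - x0| <= r ->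
      forall S, F S -> forall y : X, `|y| <= r -> `|S (x + y) - S x| <= M).
Proof.
have bounded_near := convex_family_bounded_near hY hconv hcont hbdd.
split.
  have [r [r_gt0 [M SM]]] := bounded_near 0.
  by exists r; split => //; exists M => S FS x x_le; apply: SM; rewrite ?subr0.
move=> x0; have [rho [rho_gt0 [M SM]]] := bounded_near x0.
exists (rho / 2); split; first by rewrite divr_gt0.
exists (M + M) => x x_le S FS y y_le.
apply: le_trans (ler_normB _ _) _; apply: lerD; apply: SM => //.
  rewrite addrAC; apply: le_trans (ler_normD _ _) _; lra.
by apply: le_trans x_le _; lra.
Qed.
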